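(* (Optimality condition) Let $\mathcal{X}$ be a nonempty convex subset of $\mathbb{R}^n$ and $\mathbf{F}:\mathcal{X}\to I(\mathbb{R})$ a convex interval-valued function. If for some $\bar{x}\in\mathcal{X}$ there exists $\widehat{\mathbf{G}}\in\partial\mathbf{F}(\bar{x})$ such that $(x-\bar{x})^T\odot\widehat{\mathbf{G}}\not\prec\mathbf{0}$ for all $x\in\mathcal{X}$, then $\bar{x}$ is an efficient solution of the problem $\min_{x\in\mathcal{X}}\mathbf{F}(x)$.
   Context: $I(\mathbb{R})$: nonempty compact intervals $\mathbf{A}=[\underline{a},\overline{a}]$; $\mathbf{0}=[0,0]$; $\mathbf{A}\oplus\mathbf{B}=[\underline{a}+\underline{b},\overline{a}+\overline{b}]$; $\lambda\odot\mathbf{A}=[\min\{\lambda\underline{a},\lambda\overline{a}\},\max\{\lambda\underline{a},\lambda\overline{a}\}]$; $\mathbf{A}\ominus_{gH}\mathbf{B}=[\min\{\underline{a}-\underline{b},\overline{a}-\overline{b}\},\max\{\underline{a}-\underline{b},\overline{a}-\overline{b}\}]$; $\mathbf{A}\preceq\mathbf{B}$ iff $\underline{a}\le\underline{b}$ and $\overline{a}\le\overline{b}$; $\mathbf{A}\prec\mathbf{B}$ iff either ($\underline{a}\le\underline{b}$ and $\overline{a}<\overline{b}$) or ($\underline{a}<\underline{b}$ and $\overline{a}\le\overline{b}$); $d^T\odot\widehat{\mathbf{G}}=\bigoplus_i d_i\odot\mathbf{G}_i$. Convex IVF: $\mathbf{F}(\lambda x_1+(1-\lambda)x_2)\preceq\lambda\odot\mathbf{F}(x_1)\oplus(1-\lambda)\odot\mathbf{F}(x_2)$.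 $gH$-subgradient at $\bar{x}$: $\widehat{\mathbf{G}}\in I(\mathbb{R})^n$ with $(x-\bar{x})^T\odot\widehat{\mathbf{G}}\preceq\mathbf{F}(x)\ominus_{gH}\mathbf{F}(\bar{x})$ for all $x\in\mathcal{X}$; $\partial\mathbf{F}(\bar{x})$ is their set. A point $\bar{x}\in\mathcal{X}$ is an efficient solution of $\min_{x\in\mathcal{X}}\mathbf{F}(x)$ if $\mathbf{F}(x)\not\prec\mathbf{F}(\bar{x})$ for all $x\in\mathcal{X}$, $x\ne\bar{x}$. *)

From HB Require Import structures.
From mathcomp Require Import all_boot all_order all_algebra.
From mathcomp Require Import reals.
Set Implicit Arguments. Unset Strict Implicit. Unset Printing Implicit Defensive.
Import Order.TTheory GRing.Theory Num.Theory.
Local Open Scope ring_scope.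

Record ivl (R : realType) := Itv { lo : R; hi : R; lo_le_hi : lo <= hi }.

Section IntervalOps.
Variable R : realType.

Lemma min_le_max (a b : R) : Num.min a b <= Num.max a b.
Proof. by case: (leP a b) => h; rewrite ?minEle ?maxEle ?h /= ?ltW ?lexx. Qed.

Definition mkitv (a b : R) : ivl R :=
  @Itv R (Num.min a b) (Num.max a b) (min_le_max a b).

Definition izero : ivl R := @Itv R 0 0 (lexx 0).

Lemma iadd_ok (A B : ivl R) : lo A + lo B <= hi A + hi B.
Proof. by apply: lerD; apply: lo_le_hi. Qed.

Definition iadd (A B : ivl R) : ivl R :=
  @Itv R (lo A + lo B) (hi A + hi B) (iadd_ok A B).

Definition iscale (l : R) (A : ivl R) : ivl R :=
  mkitv (l * lo A) (l * hi A).

Definition igH (A B : ivl R) : ivl R :=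
  mkitv (lo A - lo B) (hi A - hi B).

Definition ile (A B : ivl R) : Prop := lo A <= lo B /\ hi A <= hi B.

Definition ilt (A B : ivl R) : Prop :=
  (lo A <= lo B /\ hi A < hi B) \/ (lo A < lo B /\ hi A <= hi B).

Definition idot (n : nat) (d : 'cV[R]_n) (G : 'I_n -> ivl R) : ivl R :=
  \big[iadd/izero]_(i < n) iscale (d i ord0) (G i).

Definition convex_set (n : nat) (X : 'cV[R]_n -> Prop) : Prop :=
  forall x1 x2 (l : R), X x1 -> X x2 -> 0 <= l <= 1 ->
    X (l *: x1 + (1 - l) *: x2).

Definition convex_ivf (n : nat) (X : 'cV[R]_n -> Prop)
    (F : 'cV[R]_n -> ivl R) : Prop :=
  forall x1 x2 (l : R), X x1 -> X x2 -> 0 <= l <= 1 ->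
    ile (F (l *: x1 + (1 - l) *: x2)) (iadd (iscale l (F x1)) (iscale (1 - l) (F x2))).

Definition gH_subgradient (n : nat) (X : 'cV[R]_n -> Prop)
    (F : 'cV[R]_n -> ivl R) (xbar : 'cV[R]_n) (G : 'I_n -> ivl R) : Prop :=
  forall x, X x -> ile (idot (x - xbar) G) (igH (F x) (F xbar)).

Definition efficient (n : nat) (X : 'cV[R]_n -> Prop)
    (F : 'cV[R]_n -> ivl R) (xbar : 'cV[R]_n) : Prop :=
  X xbar /\ forall x, X x -> x <> xbar -> ~ ilt (F x) (F xbar).

End IntervalOps.

(* If F x were strictly below F xbar, their gH-difference would be strictly
   below 0; the subgradient inequality places (x - xbar)^T (.) G below that
   difference, hence also strictly below 0, which the hypothesis forbids. *)

From HB Require Import structures.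
From mathcomp Require Import all_boot all_order all_algebra.
From mathcomp Require Import reals.
Local Open Scope ring_scope.
Import Order.TTheory GRing.Theory Num.Theory.

Section IntervalOrder.
Variable R : realType.
Implicit Types A B C : ivl R.

Lemma ile_ilt_trans A B C : ile A B -> ilt B C -> ilt A C.
Proof.
move=> [loAB hiAB] [[loBC hiBC]|[loBC hiBC]].
- by left; split; [apply: le_trans loBC | apply: le_lt_trans hiBC].
- by right; split; [apply: le_lt_trans loBC | apply: le_trans hiBC].
Qed.

Lemma igH_ilt0 A B : ilt A B -> ilt (igH A B) (izero R).
Proof.
rewrite /ilt /= => ltAB; right; rewrite gt_min ge_max !subr_lt0 !subr_le0.
by case: ltAB => [[loAB hiAB]|[loAB hiAB]]; rewrite loAB hiAB ?orbT ?ltW.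
Qed.

End IntervalOrder.

Theorem mainTheorem18 (R : realType) (n : nat) (X : 'cV[R]_n -> Prop)
    (F : 'cV[R]_n -> ivl R) (xbar : 'cV[R]_n) :
  (exists x0, X x0) ->
  convex_set X ->
  convex_ivf X F ->
  X xbar ->
  (exists G : 'I_n -> ivl R,
      gH_subgradient X F xbar G /\
      forall x, X x -> ~ ilt (idot (x - xbar) G) (izero R)) ->
  efficient X F xbar.
Proof.
move=> _ _ _ Xxbar [G [subgradG notlt0]]; split => // x Xx _ ltFx.
apply: (notlt0 x Xx); apply: ile_ilt_trans (subgradG x Xx) _.
exact: igH_ilt0.
Qed.
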